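(* Let $(X,\le)$ be a non-empty strictly inductive poset, $f:X\to X$ and $a_0\in X$ with $a_0\le f(a_0)$. Let $W$ be the set of elements of $X$ that are the least upper bound of some $a_0$-chain. If $f$ is monotone on $W$ (i.e. $f(x)\le f(y)$ for all $x,y\in W$ with $x\le y$), then $\mathrm{lub}(W)$ exists and is a fixpoint of $f$.
   Context: A poset is strictly inductive if every non-empty chain (totally ordered subset) has a least upper bound $\mathrm{lub}$ in $X$. A subset $C\subseteq X$ is an $a_0$-chain (with respect to $f$) if: $C$ is well ordered by $\le$; $a_0$ is the least element of $C$; for every non-empty $P\subseteq C$, $\mathrm{lub}(P)$ exists and belongs to $C$; and for every $z\in C\setminus\{\mathrm{lub}(C)\}$ we have $f(z)\in C$, $z<f(z)$, and there is no $y\in C$ with $z<y<f(z)$. *)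

Section PosetDefs.
Context {X : Type} (le : X -> X -> Prop).

Definition lt (x y : X) : Prop := le x y /\ x <> y.

Definition is_partial_order : Prop :=
  (forall x, le x x) /\
  (forall x y, le x y -> le y x -> x = y) /\
  (forall x y z, le x y -> le y z -> le x z).

Definition upper_bound (S : X -> Prop) (u : X) : Prop :=
  forall s, S s -> le s u.

Definition is_lub (S : X -> Prop) (x : X) : Prop :=
  upper_bound S x /\ (forall u, upper_bound S u -> le x u).

Definition is_chain (S : X -> Prop) : Prop :=
  forall x y, S x -> S y -> le x y \/ le y x.

Definition nonempty (S : X -> Prop) : Prop := exists x, S x.

Definition strictly_inductive : Prop :=
  forall S, nonempty S -> is_chain S -> exists l, is_lub S l.

Definition well_ordered (S : X -> Prop) : Prop :=
  is_chain S /\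
  forall P : X -> Prop, (forall x, P x -> S x) -> nonempty P ->
    exists m, P m /\ forall p, P p -> le m p.

Definition a0_chain (f : X -> X) (a0 : X) (C : X -> Prop) : Prop :=
  well_ordered C /\
  C a0 /\ (forall c, C c -> le a0 c) /\
  (forall P : X -> Prop, (forall x, P x -> C x) -> nonempty P ->
     exists l, is_lub P l /\ C l) /\
  (forall z, C z -> ~ is_lub C z ->
     C (f z) /\ lt z (f z) /\ ~ (exists y, C y /\ lt z y /\ lt y (f z))).

Definition Wset (f : X -> X) (a0 : X) (x : X) : Prop :=
  exists C, a0_chain f a0 C /\ is_lub C x.

End PosetDefs.

(* Two a0-chains are always comparable, one being an initial segment of the other:
   at the first point where they part, each continues the common part by its
   supremum p or, if p belongs to the common part, by f p, so they would agree
   there after all. Hence the union U of all a0-chains is a chain, its lub w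
   (given by strict inductivity) can be adjoined to U to form an a0-chain, and
   so w lies in W = U. Monotonicity on W gives x <= f x along every a0-chain by
   well-founded induction; if w < f w, adjoining f w to an a0-chain ending at w
   would put f w into W, above its lub. *)

From Pilot Require Import Defs.
From Stdlib Require Import Classical.

Section A0Chains.
Variables (X : Type) (le : X -> X -> Prop) (f : X -> X) (a0 : X).
Hypothesis le_po : is_partial_order le.

Let le_refl : forall x, le x x := proj1 le_po.
Let le_antisym : forall x y, le x y -> le y x -> x = y := proj1 (proj2 le_po).
Let le_trans : forall x y z, le x y -> le y z -> le x z := proj2 (proj2 le_po).

Local Notation a0_chain := (Defs.a0_chain le f a0).

Lemma is_lub_unique S x y : is_lub le S x -> is_lub le S y -> x = y.
Proof. intros [Ux Lx] [Uy Ly]. apply le_antisym; auto. Qed.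

Lemma is_lub_mem_upper (S : X -> Prop) x : S x -> upper_bound le S x -> is_lub le S x.
Proof. intros Sx Ux. split; auto. Qed.

Lemma lt_of_le_neq x y : le x y -> x <> y -> lt le x y.
Proof. split; auto. Qed.

Lemma a0_chain_lub_mem C x : a0_chain C -> is_lub le C x -> C x.
Proof.
  intros (_ & Ca0 & _ & Club & _) Hx.
  destruct (Club C (fun _ h => h) (ex_intro _ a0 Ca0)) as (l & Hl & Cl).
  now rewrite (is_lub_unique _ _ _ Hx Hl).
Qed.

Lemma a0_chain_singleton : a0_chain (fun x => x = a0).
Proof.
  assert (Hlub : is_lub le (fun x => x = a0) a0).
  { apply is_lub_mem_upper; [reflexivity |]. intros s ->. auto. }
  split; [split | split; [| split; [| split]]]; auto.
  - intros x y -> ->. auto.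
  - intros P HP [x Px]. exists x. split; auto.
    intros p Pp. rewrite (HP x Px), (HP p Pp). auto.
  - intros c ->. auto.
  - intros P HP [x Px]. exists a0. split; auto.
    split; [intros s Ps; rewrite (HP s Ps); auto |].
    intros u Hu. rewrite <- (HP x Px). auto.
  - intros z -> Hz. contradiction.
Qed.

Definition initial_segment (C D : X -> Prop) : Prop :=
  forall x, C x -> D x /\ forall y, D y -> le y x -> C y.

Definition common_part (C D : X -> Prop) (x : X) : Prop :=
  C x /\ D x /\ (forall y, C y -> le y x -> D y) /\ (forall y, D y -> le y x -> C y).

Lemma common_part_sym C D x : common_part C D x -> common_part D C x.
Proof. intros (Cx & Dx & HCD & HDC). now repeat split. Qed.

Lemma common_part_lower C D x y : common_part C D x -> C y -> le y x -> common_part C D y.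
Proof.
  intros (_ & _ & HCD & HDC) Cy Hyx.
  repeat split; eauto.
Qed.

Lemma common_part_strictly_below C D : well_ordered le C ->
  ~ (forall x, C x -> common_part C D x) ->
  exists c, C c /\ forall x, common_part C D x <-> C x /\ lt le x c.
Proof.
  intros [Ctot Cleast] HCA.
  apply not_all_ex_not in HCA as [x Hx]. apply imply_to_and in Hx.
  destruct (Cleast (fun y => C y /\ ~ common_part C D y) (fun y h => proj1 h) (ex_intro _ x Hx))
    as (c & (Cc & nAc) & Hc).
  exists c. split; [exact Cc |]. intros y. split.
  - intros Ay. split; [exact (proj1 Ay) |].
    destruct (Ctot y c (proj1 Ay) Cc) as [Hyc | Hcy].
    + apply lt_of_le_neq; [exact Hyc |]. intros ->. contradiction.
    + exfalso. exact (nAc (common_part_lower C D y c Ay Cc Hcy)).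
  - intros [Cy [Hyc Hne]]. apply NNPP. intros nAy.
    exact (Hne (le_antisym y c Hyc (Hc y (conj Cy nAy)))).
Qed.

(* The element of an a0-chain following a strict initial segment is determined by
   the segment alone; this is what forces two a0-chains to agree. *)
Lemma a0_chain_next_of_lower C A c p : a0_chain C -> C c ->
  (forall x, A x <-> C x /\ lt le x c) -> is_lub le A p -> C p ->
  (A p -> c = f p) /\ (~ A p -> c = p).
Proof.
  intros ((Ctot & _) & _ & _ & _ & Csucc) Cc HA [Up Lp] Cp. split.
  - intros Ap. apply HA in Ap as (_ & Hpc & Hpc').
    assert (nlub : ~ is_lub le C p) by (intros [U _]; exact (Hpc' (le_antisym p c Hpc (U c Cc)))).
    destruct (Csucc p Cp nlub) as (Cfp & [Hpf Hpf'] & Hgap).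
    apply NNPP. intros Hne. destruct (Ctot c (f p) Cc Cfp) as [Hcf | Hfc].
    + apply Hgap. exists c. repeat split; auto.
    + assert (Afp : A (f p)) by (apply HA; auto using lt_of_le_neq).
      exact (Hpf' (le_antisym p (f p) Hpf (Up _ Afp))).
  - intros nAp. apply NNPP. intros Hne. apply nAp, HA. split; [exact Cp |].
    apply lt_of_le_neq; [| auto]. apply Lp. intros a Aa. apply HA in Aa. apply Aa.
Qed.

Lemma a0_chains_comparable C D : a0_chain C -> a0_chain D ->
  initial_segment C D \/ initial_segment D C.
Proof.
  intros HC HD.
  destruct (classic (forall x, C x -> common_part C D x)) as [HCA | HCA].
  { left. intros x Cx. destruct (HCA x Cx) as (_ & Dx & _ & HDC). auto. }
  destruct (classic (forall x, D x -> common_part C D x)) as [HDA | HDA].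
  { right. intros x Dx. destruct (HDA x Dx) as (Cx & _ & HCD & _). auto. }
  exfalso.
  destruct (common_part_strictly_below C D (proj1 HC) HCA) as (c & Cc & HAc).
  assert (HDA' : ~ (forall x, D x -> common_part D C x)).
  { intros H. apply HDA. intros x Dx. apply common_part_sym, H, Dx. }
  destruct (common_part_strictly_below D C (proj1 HD) HDA') as (d & Dd & HAd').
  assert (HAd : forall x, common_part C D x <-> D x /\ lt le x d).
  { intros x. rewrite <- HAd'. split; apply common_part_sym. }
  pose proof HC as (_ & Ca0 & Cge & Club & _). pose proof HD as (_ & Da0 & Dge & Dlub & _).
  assert (Aa0 : common_part C D a0).
  { repeat split; auto; intros y Hy Hya.
    - now rewrite (le_antisym y a0 Hya (Cge y Hy)).
    - now rewrite (le_antisym y a0 Hya (Dge y Hy)). }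
  destruct (Club (common_part C D) (fun x h => proj1 h) (ex_intro _ a0 Aa0)) as (p & Hp & Cp).
  destruct (Dlub (common_part C D) (fun x h => proj1 (proj2 h)) (ex_intro _ a0 Aa0))
    as (p' & Hp' & Dp).
  rewrite <- (is_lub_unique _ _ _ Hp Hp') in Dp.
  assert (c = d) as <-.
  { destruct (a0_chain_next_of_lower C _ c p HC Cc HAc Hp Cp) as [Cnext Clim].
    destruct (a0_chain_next_of_lower D _ d p HD Dd HAd Hp Dp) as [Dnext Dlim].
    destruct (classic (common_part C D p)) as [Ap | nAp].
    - now rewrite Cnext, Dnext.
    - now rewrite Clim, Dlim. }
  assert (Ac : common_part C D c).
  { repeat split; auto; intros y Hy Hyc; destruct (classic (y = c)) as [-> | Hne]; auto.
    - assert (Ay : common_part C D y) by (apply HAc; split; auto using lt_of_le_neq).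
      exact (proj1 (proj2 Ay)).
    - assert (Ay : common_part C D y) by (apply HAd; split; auto using lt_of_le_neq).
      exact (proj1 Ay). }
  apply HAc in Ac as (_ & _ & Hcc). now apply Hcc.
Qed.

Lemma a0_chain_lower_mem C D x d : a0_chain C -> a0_chain D ->
  C x -> D d -> le x d -> D x.
Proof.
  intros HC HD Cx Dd Hxd.
  destruct (a0_chains_comparable C D HC HD) as [HCD | HDC].
  - exact (proj1 (HCD x Cx)).
  - exact (proj2 (HDC d Dd) x Cx Hxd).
Qed.

Definition in_a0_chain (x : X) : Prop := exists C, a0_chain C /\ C x.

Lemma in_a0_chain_a0 : in_a0_chain a0.
Proof. exists (fun x => x = a0). split; [exact a0_chain_singleton | reflexivity]. Qed.

Lemma in_a0_chain_is_chain : is_chain le in_a0_chain.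
Proof.
  intros x y (C & HC & Cx) (D & HD & Dy).
  destruct (a0_chains_comparable C D HC HD) as [HCD | HDC].
  - exact (proj1 (proj1 HD) x y (proj1 (HCD x Cx)) Dy).
  - exact (proj1 (proj1 HC) x y Cx (proj1 (HDC y Dy))).
Qed.

Lemma in_a0_chain_well_ordered : well_ordered le in_a0_chain.
Proof.
  split; [exact in_a0_chain_is_chain |].
  intros P HP [x Px]. destruct (HP x Px) as (C & HC & Cx).
  destruct (proj2 (proj1 HC) (fun y => P y /\ C y) (fun y h => proj2 h) (ex_intro _ x (conj Px Cx)))
    as (m & (Pm & Cm) & Hm).
  exists m. split; [exact Pm |]. intros p Pp.
  destruct (in_a0_chain_is_chain m p (HP m Pm) (HP p Pp)) as [Hmp | Hpm]; [exact Hmp |].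
  destruct (HP p Pp) as (D & HD & Dp).
  apply Hm. split; [exact Pp | exact (a0_chain_lower_mem D C p m HD HC Dp Cm Hpm)].
Qed.

Lemma a0_chain_truncate C x : a0_chain C -> C x -> a0_chain (fun y => C y /\ le y x).
Proof.
  intros HC Cx. pose proof HC as ((Ctot & Cleast) & Ca0 & Cge & Club & Csucc).
  split; [split | split; [| split; [| split]]].
  - intros a b [Ca _] [Cb _]. auto.
  - intros P HP HnP. apply Cleast; [intros y Py; apply (HP y Py) | exact HnP].
  - split; auto.
  - intros c [Cc _]. auto.
  - intros P HP HnP.
    destruct (Club P (fun y h => proj1 (HP y h)) HnP) as (l & [Ul Ll] & Cl).
    exists l. split; [split; auto |]. split; [exact Cl |]. apply Ll. intros s Ps. apply (HP s Ps).
  - intros z [Cz Hzx] nlub.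
    assert (Hzx' : z <> x).
    { intros ->. apply nlub, is_lub_mem_upper; [split; auto |]. intros s Hs. apply Hs. }
    assert (nlubC : ~ is_lub le C z).
    { intros [Uz _]. exact (Hzx' (le_antisym z x Hzx (Uz x Cx))). }
    destruct (Csucc z Cz nlubC) as (Cfz & Hlt & Hgap).
    split; [split; [exact Cfz |] | split; [exact Hlt |]].
    + destruct (Ctot x (f z) Cx Cfz) as [Hxf | Hfx]; [| exact Hfx].
      destruct (classic (x = f z)) as [-> | Hne]; [apply le_refl |].
      exfalso. apply Hgap. exists x. split; [exact Cx | split; apply lt_of_le_neq; auto].
    + intros (y & [Cy _] & Hy). apply Hgap. exists y. auto.
Qed.

Lemma Wset_iff x : Wset le f a0 x <-> in_a0_chain x.
Proof.
  split.
  - intros (C & HC & Hx). exists C. split; [exact HC | exact (a0_chain_lub_mem C x HC Hx)].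
  - intros (C & HC & Cx). exists (fun y => C y /\ le y x).
    split; [exact (a0_chain_truncate C x HC Cx) |].
    apply is_lub_mem_upper; [split; auto |]. intros s Hs. apply Hs.
Qed.

Lemma well_ordered_add_top S t : well_ordered le S -> upper_bound le S t ->
  well_ordered le (fun x => S x \/ x = t).
Proof.
  intros [Stot Sleast] Ut. split.
  - intros x y [Sx | ->] [Sy | ->]; auto.
  - intros P HP [x Px]. destruct (classic (exists y, P y /\ S y)) as [(y & Py & Sy) | HnS].
    + destruct (Sleast (fun z => P z /\ S z) (fun z h => proj2 h) (ex_intro _ y (conj Py Sy)))
        as (m & (Pm & Sm) & Hm).
      exists m. split; [exact Pm |]. intros p Pp.
      destruct (HP p Pp) as [Sp | ->]; [apply Hm; auto | auto].
    + assert (Pt : forall p, P p -> p = t).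
      { intros p Pp. destruct (HP p Pp) as [Sp | Ep]; [exfalso; eauto | exact Ep]. }
      exists x. split; [exact Px |]. intros p Pp. rewrite (Pt x Px), (Pt p Pp). auto.
Qed.

Lemma a0_chain_extend C m : a0_chain C -> is_lub le C m -> lt le m (f m) ->
  a0_chain (fun x => C x \/ x = f m).
Proof.
  intros HC Hm [Hmf Hmf'].
  pose proof HC as (Cwo & Ca0 & Cge & Club & Csucc).
  assert (Cm : C m) by exact (a0_chain_lub_mem C m HC Hm).
  assert (Ufm : upper_bound le (fun x => C x \/ x = f m) (f m)).
  { intros x [Cx | ->]; [exact (le_trans x m (f m) (proj1 Hm x Cx) Hmf) | apply le_refl]. }
  split; [| split; [| split; [| split]]].
  - apply well_ordered_add_top; [exact Cwo |]. intros x Cx. apply Ufm. left. exact Cx.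
  - left. exact Ca0.
  - intros c [Cc | ->]; [exact (Cge c Cc) | exact (le_trans a0 m (f m) (Cge m Cm) Hmf)].
  - intros P HP HnP. destruct (classic (P (f m))) as [Pf | nPf].
    + exists (f m). split; [| right; reflexivity].
      apply is_lub_mem_upper; [exact Pf |]. intros s Ps. exact (Ufm s (HP s Ps)).
    + assert (PC : forall s, P s -> C s).
      { intros s Ps. destruct (HP s Ps) as [Cs | ->]; [exact Cs | contradiction]. }
      destruct (Club P PC HnP) as (l & Hl & Cl). exists l. split; [exact Hl | left; exact Cl].
  - intros z Ez nlub.
    assert (Cz : C z).
    { destruct Ez as [Cz | ->]; [exact Cz | exfalso; apply nlub, is_lub_mem_upper; auto]. }
    destruct (classic (z = m)) as [-> | Hzm].
    + split; [right; reflexivity | split; [split; auto |]].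
      intros (y & [Cy | ->] & [Hmy Hmy'] & [Hyf Hyf']).
      * exact (Hmy' (le_antisym m y Hmy (proj1 Hm y Cy))).
      * exact (Hyf' eq_refl).
    + assert (nlubC : ~ is_lub le C z) by (intros Hz; exact (Hzm (is_lub_unique C z m Hz Hm))).
      destruct (Csucc z Cz nlubC) as (Cfz & Hzf & Hgap).
      split; [left; exact Cfz | split; [exact Hzf |]].
      intros (y & [Cy | ->] & Hzy & [Hyf Hyf']).
      * apply Hgap. exists y. split; [exact Cy | split; [exact Hzy | split; auto]].
      * apply Hyf'. apply le_antisym; [exact Hyf |].
        exact (le_trans (f z) m (f m) (proj1 Hm (f z) Cfz) Hmf).
Qed.

Section LubOfAllChains.
Variable w : X.
Hypothesis w_lub : is_lub le in_a0_chain w.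

Lemma in_a0_chain_lub_closed P : (forall x, P x -> in_a0_chain x) -> nonempty P ->
  exists l, is_lub le P l /\ (in_a0_chain l \/ l = w).
Proof.
  intros HP HnP.
  destruct (classic (exists d, in_a0_chain d /\ upper_bound le P d))
    as [(d & (D & HD & Dd) & Ud) | Hno].
  - assert (PD : forall s, P s -> D s).
    { intros s Ps. destruct (HP s Ps) as (S & HS & Ss).
      exact (a0_chain_lower_mem S D s d HS HD Ss Dd (Ud s Ps)). }
    pose proof HD as (_ & _ & _ & Dlub & _).
    destruct (Dlub P PD HnP) as (l & Hl & Dl).
    exists l. split; [exact Hl | left; exists D; auto].
  - exists w. split; [| right; reflexivity]. split.
    + intros s Ps. exact (proj1 w_lub s (HP s Ps)).
    + intros u Hu. apply (proj2 w_lub). intros x Ux.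
      assert (nUx : ~ upper_bound le P x) by (intros H; apply Hno; eauto).
      apply not_all_ex_not in nUx as [p Hp]. apply imply_to_and in Hp as [Pp Hpx].
      destruct (in_a0_chain_is_chain x p Ux (HP p Pp)) as [Hxp | Hpx']; [| contradiction].
      exact (le_trans x p u Hxp (Hu p Pp)).
Qed.

Lemma in_a0_chain_succ z : in_a0_chain z -> ~ upper_bound le in_a0_chain z ->
  in_a0_chain (f z) /\ lt le z (f z) /\
  ~ (exists y, in_a0_chain y /\ lt le z y /\ lt le y (f z)).
Proof.
  intros (S & HS & Sz) nUz.
  apply not_all_ex_not in nUz as [x Hx]. apply imply_to_and in Hx as [Ux Hxz].
  destruct (in_a0_chain_is_chain z x (ex_intro _ S (conj HS Sz)) Ux) as [Hzx | Hxz'];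
    [| contradiction].
  destruct Ux as (D & HD & Dx). pose proof HD as (_ & _ & _ & _ & Dsucc).
  assert (Dz : D z) by exact (a0_chain_lower_mem S D z x HS HD Sz Dx Hzx).
  assert (nlubD : ~ is_lub le D z) by (intros [Uz _]; exact (Hxz (Uz x Dx))).
  destruct (Dsucc z Dz nlubD) as (Dfz & Hzf & Hgap).
  split; [exists D; auto | split; [exact Hzf |]].
  intros (y & (D' & HD' & D'y) & Hzy & Hyf). apply Hgap. exists y.
  split; [exact (a0_chain_lower_mem D' D y (f z) HD' HD D'y Dfz (proj1 Hyf)) | auto].
Qed.

Lemma a0_chain_add_lub : a0_chain (fun x => in_a0_chain x \/ x = w).
Proof.
  assert (Uw : upper_bound le (fun x => in_a0_chain x \/ x = w) w).
  { intros x [Ux | ->]; [exact (proj1 w_lub x Ux) | apply le_refl]. }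
  split; [| split; [| split; [| split]]].
  - exact (well_ordered_add_top _ w in_a0_chain_well_ordered (proj1 w_lub)).
  - left. exact in_a0_chain_a0.
  - intros c [(C & (_ & _ & Cge & _) & Cc) | ->]; [exact (Cge c Cc) |].
    exact (proj1 w_lub a0 in_a0_chain_a0).
  - intros P HP HnP. destruct (classic (P w)) as [Pw | nPw].
    + exists w. split; [| right; reflexivity].
      apply is_lub_mem_upper; [exact Pw |]. intros s Ps. exact (Uw s (HP s Ps)).
    + apply in_a0_chain_lub_closed; [| exact HnP].
      intros s Ps. destruct (HP s Ps) as [Us | ->]; [exact Us | contradiction].
  - intros z Ez nlub.
    assert (Hzw : z <> w) by (intros ->; exact (nlub (is_lub_mem_upper _ w Ez Uw))).
    assert (Uz : in_a0_chain z) by (destruct Ez as [Uz | ->]; [exact Uz | contradiction]).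
    assert (nUz : ~ upper_bound le in_a0_chain z)
      by (intros Hz; exact (Hzw (le_antisym z w (proj1 w_lub z Uz) (proj2 w_lub z Hz)))).
    destruct (in_a0_chain_succ z Uz nUz) as (Ufz & Hzf & Hgap).
    split; [left; exact Ufz | split; [exact Hzf |]].
    intros (y & [Uy | ->] & Hzy & [Hyf Hyf']).
    + apply Hgap. exists y. split; [exact Uy | split; [exact Hzy | split; auto]].
    + exact (Hyf' (le_antisym w (f z) Hyf (proj1 w_lub (f z) Ufz))).
Qed.

Lemma in_a0_chain_lub : in_a0_chain w.
Proof.
  apply Wset_iff. exists (fun x => in_a0_chain x \/ x = w). split; [exact a0_chain_add_lub |].
  apply is_lub_mem_upper; [right; reflexivity |].
  intros x [Ux | ->]; [exact (proj1 w_lub x Ux) | apply le_refl].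
Qed.

End LubOfAllChains.

Lemma is_lub_Wset w : is_lub le in_a0_chain w -> is_lub le (Wset le f a0) w.
Proof.
  intros [Uw Lw]. split.
  - intros s Ws. apply Uw, Wset_iff, Ws.
  - intros u Hu. apply Lw. intros s Us. apply Hu, Wset_iff, Us.
Qed.

Section MonotoneOnW.
Hypothesis a0_le_f : le a0 (f a0).
Hypothesis f_mono : forall x y, Wset le f a0 x -> Wset le f a0 y -> le x y -> le (f x) (f y).

Lemma a0_chain_inflationary C x : a0_chain C -> C x -> le x (f x).
Proof.
  intros HC Cx. pose proof HC as ((_ & Cleast) & Ca0 & Cge & Club & _).
  assert (CW : forall y, C y -> Wset le f a0 y) by (intros y Cy; apply Wset_iff; exists C; auto).
  apply NNPP. intros Hx.
  destruct (Cleast (fun y => C y /\ ~ le y (f y)) (fun y h => proj1 h)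
              (ex_intro _ x (conj Cx Hx))) as (c & (Cc & Hc) & Hmin).
  set (A := fun y => C y /\ lt le y c).
  assert (A_infl : forall y, A y -> le y (f y)).
  { intros y [Cy [Hyc Hyc']]. apply NNPP. intros Hy.
    exact (Hyc' (le_antisym y c Hyc (Hmin y (conj Cy Hy)))). }
  assert (Aa0 : A a0).
  { split; [exact Ca0 |]. apply lt_of_le_neq; [exact (Cge c Cc) |]. intros <-. contradiction. }
  destruct (Club A (fun y h => proj1 h) (ex_intro _ a0 Aa0)) as (p & Hp & Cp).
  destruct (a0_chain_next_of_lower C A c p HC Cc (fun y => iff_refl (A y)) Hp Cp) as [Hnext Hlim].
  apply Hc. destruct (classic (A p)) as [Ap | nAp].
  - rewrite (Hnext Ap). apply f_mono; auto. apply CW. rewrite <- (Hnext Ap). exact Cc.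
  - rewrite (Hlim nAp) at 1. apply (proj2 Hp). intros y [Cy Hyc].
    apply (le_trans y (f y) (f c)); [apply A_infl; split; auto |].
    apply f_mono; auto. apply Hyc.
Qed.

Lemma lub_in_a0_chain_fixpoint w : is_lub le in_a0_chain w -> f w = w.
Proof.
  intros Hw. destruct (in_a0_chain_lub w Hw) as (C & HC & Cw).
  assert (HwC : is_lub le C w).
  { apply is_lub_mem_upper; [exact Cw |]. intros x Cx. apply (proj1 Hw). exists C. auto. }
  assert (Hwf : le w (f w)) by exact (a0_chain_inflationary C w HC Cw).
  apply NNPP. intros Hne.
  assert (Ufw : in_a0_chain (f w)).
  { exists (fun x => C x \/ x = f w). split; [| right; reflexivity].
    apply a0_chain_extend; [exact HC | exact HwC |]. apply lt_of_le_neq; auto. }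
  exact (Hne (le_antisym (f w) w (proj1 Hw (f w) Ufw) Hwf)).
Qed.

End MonotoneOnW.

End A0Chains.

Theorem mainTheorem3 (X : Type) (le : X -> X -> Prop) (f : X -> X) (a0 : X) :
  is_partial_order le ->
  (exists x : X, True) ->
  strictly_inductive le ->
  le a0 (f a0) ->
  (forall x y, Wset le f a0 x -> Wset le f a0 y -> le x y -> le (f x) (f y)) ->
  exists w, is_lub le (Wset le f a0) w /\ f w = w.
Proof.
  intros le_po _ X_inductive a0_le_f f_mono.
  destruct (X_inductive (in_a0_chain X le f a0) (ex_intro _ a0 (in_a0_chain_a0 X le f a0 le_po))
              (in_a0_chain_is_chain X le f a0 le_po)) as [w Hw].
  exists w. split.
  - exact (is_lub_Wset X le f a0 le_po w Hw).
  - exact (lub_in_a0_chain_fixpoint X le f a0 le_po a0_le_f f_mono w Hw).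
Qed.
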